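(* For every ordinal $\beta$ with $1\leq\beta\leq\omega_1$, state bisimilarity $\sim_s$ on $\mathbb{S}(\beta)$ is the identity relation on $I\times\beta$.
   Context: An LMP is $(S,\Sigma,\{\tau_a\}_{a\in L})$ with $L$ countable and Markov kernels $\tau_a$ (subprobability measures in the second argument, measurable in the first). For a relation $R$, $\Sigma(R)$ = $R$-closed members of $\Sigma$ ($A$ is $R$-closed if $x\in A$, $xRs\Rightarrow s\in A$). A state bisimulation is a symmetric relation $R$ such that $sRt$ and $C\in\Sigma(R)$ imply $\tau_a(s,C)=\tau_a(t,C)$ for all $a$; $\sim_s$ is the union of all state bisimulations. The processes $\mathbb{S}(\beta)$: $I=(0,1)$, $\mathfrak{m}$ Lebesgue measure, $V\subseteq I$ Lebesgue nonmeasurable, $\mathcal{B}_V=\sigma(\mathcal{B}(I)\cup\{V\})$, and $\mathfrak{m}_0,\mathfrak{m}_1$ measures on $\mathcal{B}_V$ extending $\mathfrak{m}$ with $\mathfrak{m}_0(V)\neq\mathfrak{m}_1(V)$. Let $\{q_n\}_{n\in\omega}$ enumerate $\mathbb{Q}\cap I$. For ordinals $\eta$: $\alpha_n(0)=0$, $\alpha_n(\zeta+1)=\zeta$ for all $n$, and for limit $\lambda$, $(\alpha_n(\lambda))_{n\in\omega}$ is a fixed strictly increasing sequence of nonzero ordinals below $\lambda$ cofinal in $\lambda$. For an ordinal $\beta\leq\omega_1$, $\mathbb{S}(\beta)=(I\times\beta,\ \mathcal{B}_V\otimes\mathcal{P}(\beta),\ \{\tau_n\}_{n\in\omega})$ with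 $\tau_n((x,\eta),A)=x\cdot\mathfrak{m}_0(A_0)$ if $\eta=0$; $=\mathfrak{m}_0(A_{\alpha_n(\eta)})$ if $\eta>0$ and $x<q_n$; $=\mathfrak{m}_1(A_{\alpha_n(\eta)})$ if $\eta>0$ and $x\geq q_n$; here $A_\gamma=\{r:(r,\gamma)\in A\}$. These $\tau_n$ are Markov kernels, so $\mathbb{S}(\beta)$ is an LMP. *)

From mathcomp Require Import all_boot all_order all_algebra.
From mathcomp Require Import all_classical all_reals all_analysis.
Import Order.TTheory GRing.Theory Num.Theory.
Import numFieldNormedType.Exports.

Set Implicit Arguments.
Unset Strict Implicit.
Unset Printing Implicit Defensive.

Local Open Scope classical_set_scope.
Local Open Scope ring_scope.

Definition rel_closed (S : Type) (Rel : S -> S -> Prop) (A : set S) : Prop :=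
  forall x s, A x -> Rel x s -> A s.

Definition Sigma_closed (S : Type) (Sig : set (set S)) (Rel : S -> S -> Prop)
  : set (set S) := [set A | Sig A /\ rel_closed Rel A].

(* State bisimulation on an LMP (S, Sig, {tau a}_{a in L}). *)
Definition state_bisimulation (R : realType) (S L : Type)
    (Sig : set (set S)) (tau : L -> S -> set S -> \bar R)
    (Rel : S -> S -> Prop) : Prop :=
  (forall s t, Rel s t -> Rel t s) /\
  (forall s t C, Rel s t -> Sigma_closed Sig Rel C ->
     forall a, tau a s C = tau a t C).

Definition state_bisimilar (R : realType) (S L : Type)
    (Sig : set (set S)) (tau : L -> S -> set S -> \bar R) (s t : S) : Prop :=
  exists Rel, state_bisimulation Sig tau Rel /\ Rel s t.

(* Ordinals, presented as well-ordered types (B, lt).                   *)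

Definition strict_well_order (B : Type) (lt : B -> B -> Prop) : Prop :=
  [/\ (forall x, ~ lt x x),
      (forall x y z, lt x y -> lt y z -> lt x z),
      (forall x y, lt x y \/ x = y \/ lt y x) &
      well_founded lt].

(* every element has countably many predecessors: the order type is <= omega_1 *)
Definition countable_initial_segments (B : Type) (lt : B -> B -> Prop) : Prop :=
  forall y : B, countable [set x | lt x y].

Definition is_zero (B : Type) (lt : B -> B -> Prop) (z : B) : Prop :=
  forall x, ~ lt x z.

Definition is_succ_of (B : Type) (lt : B -> B -> Prop) (z y : B) : Prop :=
  lt z y /\ forall w, ~ (lt z w /\ lt w y).

Definition is_limit (B : Type) (lt : B -> B -> Prop) (l : B) : Prop :=
  ~ is_zero lt l /\ ~ (exists z, is_succ_of lt z l).

Definition alpha_spec (B : Type) (lt : B -> B -> Prop) (alpha : nat -> B -> B)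
  : Prop :=
  [/\ (forall n z, is_zero lt z -> alpha n z = z),
      (forall n z y, is_succ_of lt z y -> alpha n y = z) &
      (forall l, is_limit lt l ->
         [/\ (forall n, lt (alpha n l) (alpha n.+1 l)),
             (forall n, ~ is_zero lt (alpha n l)),
             (forall n, lt (alpha n l) l) &
             (forall x, lt x l -> exists n, x = alpha n l \/ lt x (alpha n l))])].

Definition I (R : realType) := {x : R | (0 < x) && (x < 1)}.

(* Lebesgue measurable subsets of R (Caratheodory/completed sigma-algebra) *)
Definition lebesgue_measurable (R : realType) (A : set R) : Prop :=
  (@wlength R idfun)^*%mu.-cara.-measurable A.

Definition borelI (R : realType) : set (set (I R)) :=
  [set A | exists B : set R, measurable B /\ A = [set x : I R | B (sval x)]].

Definition BV (R : realType) (V : set (I R)) : set (set (I R)) :=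
  <<s @borelI R `|` [set V] >>.

Definition is_measure_on (R : realType) (T : Type) (G : set (set T))
    (mu : set T -> \bar R) : Prop :=
  [/\ mu set0 = 0%E,
      (forall A, G A -> (0 <= mu A)%E) &
      (forall F : nat -> set T, (forall k, G (F k)) -> trivIset setT F ->
         (fun n => \sum_(k < n) mu (F k))%E @ \oo --> mu (\bigcup_k F k))].

Definition extends_lebesgue (R : realType) (mu : set (I R) -> \bar R) : Prop :=
  forall B : set R, measurable B ->
    mu [set x : I R | B (sval x)] = lebesgue_measure (B `&` `]0, 1[).

Definition is_rational (R : realType) (x : R) : Prop := exists r : rat, x = ratr r.

Definition enumerates_QI (R : realType) (q : nat -> R) : Prop :=
  injective q /\ range q = [set x | is_rational x /\ 0 < x < 1].

Definition section (R : realType) (B : Type) (A : set (I R * B)) (g : B)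
  : set (I R) := [set r | A (r, g)].

Definition SSigma (R : realType) (B : Type) (V : set (I R)) : set (set (I R * B)) :=
  <<s [set C | exists (A : set (I R)) (D : set B), BV V A /\ C = A `*` D] >>.

Definition Stau (R : realType) (B : Type) (lt : B -> B -> Prop)
    (alpha : nat -> B -> B) (q : nat -> R) (m0 m1 : set (I R) -> \bar R)
    (n : nat) (s : I R * B) (A : set (I R * B)) : \bar R :=
  let x := s.1 in let eta := s.2 in
  if `[< is_zero lt eta >] then ((sval x)%:E * m0 (section A eta))%E
  else if sval x < q n then m0 (section A (alpha n eta))
  else m1 (section A (alpha n eta)).

From mathcomp Require Import all_boot all_order all_algebra.
From mathcomp Require Import all_classical all_reals all_analysis.
Import Order.TTheory GRing.Theory Num.Theory.

Set Implicit Arguments.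
Unset Strict Implicit.
Unset Printing Implicit Defensive.
Local Open Scope classical_set_scope.
Local Open Scope ring_scope.

(* The identity relation is trivially a state bisimulation, so the content is
   that every state bisimulation Rel relates a state only to itself.  We prove
   [Rel (x, eta) u -> u = (x, eta)] by well-founded induction on the level eta.
   - Level 0: testing the closed set I x beta with any label gives
     x * m0(I) = x, which pins down both the first coordinate and (since a
     nonzero level would give total mass 1 > x) the level of u.
   - Level eta > 0, u = (y, zeta): by induction Rel is trivial below eta, so
     every rectangle A x {alpha_n eta} with A in B_V is Rel-closed.  Testing
     I x {alpha_n eta} with label n gives alpha_n zeta = alpha_n eta for all
     n, hence zeta = eta because alpha determines nonzero ordinals.  Testing
     V x {alpha_n eta} with label n, where x < q_n <= y, would give
     m0(V) = m1(V); so y = x by density of the q_n. *)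

Section OrdinalSequences.
Variables (B : Type) (lt : B -> B -> Prop) (alpha : nat -> B -> B).
Hypothesis wo : strict_well_order lt.
Hypothesis aspec : alpha_spec lt alpha.

Lemma zero_unique z1 z2 : is_zero lt z1 -> is_zero lt z2 -> z1 = z2.
Proof.
have [_ _ tri _] := wo; move=> h1 h2.
by case: (tri z1 z2) => [/h2[]|[//|/h1[]]].
Qed.

Lemma succ_or_limit eta : ~ is_zero lt eta ->
  (exists z, is_succ_of lt z eta) \/ is_limit lt eta.
Proof.
move=> hz; case: (pselect (exists z, is_succ_of lt z eta)) => h; first by left.
by right; split.
Qed.

Lemma alpha_lt n eta : ~ is_zero lt eta -> lt (alpha n eta) eta.
Proof.
have [_ asu alim] := aspec.
move=> /[dup] hz /succ_or_limit [[z hs]|hl].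
  by rewrite (asu n z eta hs); case: hs.
by case: (alim eta hl).
Qed.

Lemma alpha_same_not_lt a b : ~ is_zero lt a -> ~ is_zero lt b ->
  (forall n, alpha n a = alpha n b) -> ~ lt a b.
Proof.
have [irr tr _ _] := wo; have [_ asu alim] := aspec.
move=> hza hzb hab ab.
case: (succ_or_limit hzb) => [[w hw]|hlb].
  case: (succ_or_limit hza) => [[z hz]|hla].
    have zw : z = w by rewrite -(asu 0%N _ _ hz) -(asu 0%N _ _ hw).
    by case: hw => _ /(_ a); apply; split=> //; rewrite -zw; case: hz.
  case: (alim a hla) => inc _ _ _.
  by have := inc 0%N; rewrite !hab (asu 0%N _ _ hw) (asu 1%N _ _ hw); apply: irr.
case: (alim b hlb) => _ _ _ cof.
have [n [e|l]] := cof a ab; apply: (irr a).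
  by rewrite {1}e -hab; apply: alpha_lt.
by apply: (tr _ _ _ l); rewrite -hab; apply: alpha_lt.
Qed.

Lemma alpha_inj eta zeta : ~ is_zero lt eta -> ~ is_zero lt zeta ->
  (forall n, alpha n zeta = alpha n eta) -> zeta = eta.
Proof.
have [_ _ tri _] := wo; move=> hze hzz ha.
case: (tri zeta eta) => [h|[//|h]]; first by case: (alpha_same_not_lt hzz hze ha h).
by case: (alpha_same_not_lt hze hzz (fun n => esym (ha n)) h).
Qed.

End OrdinalSequences.

Lemma extends_lebesgue_setT (R : realType) (m : set (I R) -> \bar R) :
  extends_lebesgue m -> m setT = 1%E.
Proof.
move=> em; have := em setT measurableT.
have -> : [set x : I R | setT (sval x)] = setT by apply/seteqP; split.
by rewrite setTI lebesgue_measure_itv /= => ->; rewrite lte_fin ltr01 oppr0 adde0.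
Qed.

Lemma enumerates_QI_dense (R : realType) (q : nat -> R) (a b : R) :
  enumerates_QI q -> 0 < a -> b < 1 -> a < b -> exists n, a < q n /\ q n <= b.
Proof.
move=> [_ qrange] a0 b1 ab; have [r] := rat_in_itvoo ab.
rewrite in_itv /= => /andP[ar rb].
have : range q (ratr r).
  rewrite qrange; split; first by exists r.
  by rewrite (lt_trans a0 ar) (lt_trans rb b1).
by case=> n _ qn; exists n; rewrite qn ar ltW.
Qed.

Lemma sigma_generated_setT (T : Type) (G : set (set T)) : <<s G >> setT.
Proof. by move=> P [[P0 PC _] _]; rewrite -(setD0 setT); apply: PC. Qed.

Lemma BV_setT (R : realType) (V : set (I R)) : BV V setT.
Proof. exact: sigma_generated_setT. Qed.

Lemma BV_V (R : realType) (V : set (I R)) : BV V V.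
Proof. by move=> P [_ GP]; apply: GP; right. Qed.

Lemma SSigma_rect (R : realType) (B : Type) (V : set (I R)) A (D : set B) :
  BV V A -> SSigma V (A `*` D).
Proof. by move=> HA P [_ GP]; apply: GP; exists A, D. Qed.

Lemma section_setT (R : realType) (B : Type) (g : B) :
  section (setT : set (I R * B)) g = setT.
Proof. by apply/seteqP; split. Qed.

Lemma section_rect_eq (R : realType) (B : Type) (A : set (I R)) (g : B) :
  section (A `*` [set g]) g = A.
Proof. by apply/seteqP; split => r /=; [case|]. Qed.

Lemma section_rect_neq (R : realType) (B : Type) (A : set (I R)) (g h : B) :
  h <> g -> section (A `*` [set g]) h = set0.
Proof. by move=> hg; apply/seteqP; split => r //= [_ /hg]. Qed.

Lemma Stau_nonzero (R : realType) (B : Type) (lt : B -> B -> Prop) alpha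
    (q : nat -> R) m0 m1 n x eta C : ~ is_zero lt eta ->
  Stau lt alpha q m0 m1 n (x, eta) C =
  if sval x < q n then m0 (section C (alpha n eta))
  else m1 (section C (alpha n eta)).
Proof. by move=> hz; rewrite /Stau /= asboolF. Qed.

Definition trivial_at (S B : Type) (Rel : S * B -> S * B -> Prop) (g : B) : Prop :=
  forall x u, Rel (x, g) u -> u = (x, g).

Section BisimulationIsTrivial.
Variables (R : realType) (V : set (I R)) (m0 m1 : set (I R) -> \bar R).
Variables (q : nat -> R) (B : Type) (lt : B -> B -> Prop) (alpha : nat -> B -> B).
Hypothesis m00 : m0 set0 = 0%E.
Hypothesis m10 : m1 set0 = 0%E.
Hypothesis e0 : extends_lebesgue m0.
Hypothesis e1 : extends_lebesgue m1.
Hypothesis m0V_neq_m1V : m0 V <> m1 V.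
Hypothesis qenum : enumerates_QI q.
Hypothesis wo : strict_well_order lt.
Hypothesis aspec : alpha_spec lt alpha.
Variable Rel : I R * B -> I R * B -> Prop.
Hypothesis bisim : state_bisimulation (SSigma V) (Stau lt alpha q m0 m1) Rel.

Lemma bisim_zero_level z : is_zero lt z -> trivial_at Rel z.
Proof.
have [_ key] := bisim; move=> hz x [y zeta] hr.
have cl : Sigma_closed (@SSigma R B V) Rel setT by split=> //; apply: sigma_generated_setT.
have := key _ _ setT hr cl 0%N.
rewrite /Stau /= asboolT // section_setT extends_lebesgue_setT // mule1.
case: (pselect (is_zero lt zeta)) => hzeta.
  rewrite asboolT // mule1 => -[/val_inj ->].
  by rewrite (zero_unique wo hz hzeta).
(* at a nonzero level the mass would be 1, but x < 1 *)
rewrite asboolF // ?section_setT !extends_lebesgue_setT //.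
by case: ifP => _ /(congr1 fine) /= hx; move: (svalP x); rewrite hx => /andP[_]; rewrite ltxx.
Qed.

Lemma rect_closed A g : BV V A -> trivial_at Rel g ->
  Sigma_closed (SSigma V) Rel (A `*` [set g]).
Proof.
move=> HA triv; split; first exact: SSigma_rect.
by move=> [r h] s' [/= Ar ->] /triv ->.
Qed.

Lemma bisim_same_alpha x eta y zeta : ~ is_zero lt eta -> ~ is_zero lt zeta ->
  (forall n, trivial_at Rel (alpha n eta)) ->
  Rel (x, eta) (y, zeta) -> forall n, alpha n zeta = alpha n eta.
Proof.
have [_ key] := bisim; move=> hze hzz below hr n; apply: contrapT => hne.
have := key _ _ _ hr (rect_closed (@BV_setT _ V) (below n)) n.
rewrite !Stau_nonzero // section_rect_eq (section_rect_neq _ hne) m00 m10.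
by rewrite !extends_lebesgue_setT // !if_same => /eqP; rewrite onee_eq0.
Qed.

Lemma bisim_not_lt x y eta : ~ is_zero lt eta ->
  (forall n, trivial_at Rel (alpha n eta)) ->
  Rel (x, eta) (y, eta) -> ~ sval x < sval y.
Proof.
have [_ key] := bisim; move=> hze below hr xy.
have [x0 _] := andP (svalP x); have [_ y1] := andP (svalP y).
have [n [xq qy]] := enumerates_QI_dense qenum x0 y1 xy.
have := key _ _ _ hr (rect_closed (@BV_V _ V) (below n)) n.
by rewrite !Stau_nonzero // !section_rect_eq xq ltNge qy /=; apply: m0V_neq_m1V.
Qed.

Lemma bisim_trivial eta : trivial_at Rel eta.
Proof.
have [_ _ _ wf] := wo; have [sym _] := bisim.
elim/(well_founded_ind wf): eta => eta IH x [y zeta] hr.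
case: (pselect (is_zero lt eta)) => hze; first exact: bisim_zero_level.
case: (pselect (is_zero lt zeta)) => hzz.
  by rewrite (bisim_zero_level hzz (sym _ _ hr)).
have below n : trivial_at Rel (alpha n eta) by apply/IH; apply: (alpha_lt aspec).
have same_level := alpha_inj wo aspec hze hzz (bisim_same_alpha hze hzz below hr).
subst zeta.
congr pair; apply: val_inj.
case: (ltgtP (sval y) (sval x)) => // h.
  by case: (bisim_not_lt hze below (sym _ _ hr) h).
by case: (bisim_not_lt hze below hr h).
Qed.

End BisimulationIsTrivial.

Lemma eq_state_bisimulation (R : realType) (S L : Type) (Sig : set (set S))
    (tau : L -> S -> set S -> \bar R) :
  state_bisimulation Sig tau eq.
Proof. by split=> [s t ->|s t C ->]. Qed.

Theorem lemma5p3 (R : realType)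
    (V : set (I R)) (m0 m1 : set (I R) -> \bar R) (q : nat -> R)
    (B : Type) (lt : B -> B -> Prop) (alpha : nat -> B -> B) :
  ~ lebesgue_measurable [set sval x | x in V] ->
  is_measure_on (BV V) m0 -> is_measure_on (BV V) m1 ->
  extends_lebesgue m0 -> extends_lebesgue m1 ->
  m0 V <> m1 V ->
  enumerates_QI q ->
  strict_well_order lt -> countable_initial_segments lt -> inhabited B ->
  alpha_spec lt alpha ->
  forall s t : I R * B,
    state_bisimilar (@SSigma R B V) (Stau lt alpha q m0 m1) s t <-> s = t.
Proof.
move=> _ [m00 _ _] [m10 _ _] e0 e1 hV qenum wo _ _ aspec s t; split.
  case=> Rel [bisim st]; case: s st => x eta st.
  by rewrite (bisim_trivial m00 m10 e0 e1 hV qenum wo aspec bisim st).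
by move=> <-; exists eq; split=> //; apply: eq_state_bisimulation.
Qed.
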